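(* Any staircase shape $S$ on $n$ nodes whose number of turning points is bounded by a constant can be grown from a single node in $O(\log n)$ time steps, both in the connectivity graph model and in the adjacency graph model.
   Context: Shapes. Grid points are integer pairs $(x,y)$; two grid points are adjacent if they are at orthogonal (Manhattan) distance $1$. A shape $S=(V,E)$ is a finite connected graph whose nodes occupy distinct grid points and whose edges join only pairs of nodes occupying adjacent points; shapes are considered up to translation, and $n=|V|$. The adjacency closure $AC(S)$ is obtained from $S$ by adding an edge between every pair of adjacent nodes that are not yet joined. Growth operations. One node, the anchor $u_0$, is stationary; other nodes move relative to it. A growth operation on a node $u$ toward an adjacent grid point $p$ either (i) if $u$ has no edge to $p$, creates a new node $u'$ at $p$ with edge $uu'$; or (ii) if $p$ is occupied by a node $v$ with $uv\in E$, creates a new node $u'$ at $p$, replaces edge $uv$ by edges $uu',u'v$, and translates by one unit, along the axis of $uv$, the part of a spanning tree rooted at $u_0$ hanging from whichever of $u,v$ is farther from $u_0$, away from the other endpoint. In one time step a set of operations is applied concurrently, each node receiving at most one operation and all operations having the same cardinal direction; the displacement of each node is the sum of the unit vectors contributed by the operations on its path to $u_0$. The set is collision-free if no two nodes collide during these motions or end at the same point, and no cycle is distorted (displacements along the two paths of any cycle between two of its nodes agree). Growth processes. A growth process from $S_1^b=S_0$ applies in each time step $t$ a collision-free set of operations to $S_t^b$ obtaining $S_t^e$ (deleting no edges). In the connectivity graph model $S_{t+1}^b=S_t^e$; in the adjacency graph model $S_{t+1}^b=AC(S_t^e)$. It grows $S$ in $t_f$ steps if the shape after step $t_f$ is $S$.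 For a path, a node is a turning point if it is an endpoint or its two path-neighbors form a right angle at it. A staircase is a path whose turning points, ordered from one endpoint to the other, alternate between two clockwise- (or counterclockwise-) consecutive cardinal directions. *)

From mathcomp Require Import all_boot all_order all_algebra.
Set Implicit Arguments. Unset Strict Implicit. Unset Printing Implicit Defensive.
Import Order.TTheory GRing.Theory Num.Theory.

Definition point := (int * int)%type.

Definition padd (p q : point) : point := ((p.1 + q.1)%R, (p.2 + q.2)%R).
Definition psub (p q : point) : point := ((p.1 - q.1)%R, (p.2 - q.2)%R).
Definition pscale (k : int) (p : point) : point := ((k * p.1)%R, (k * p.2)%R).
Definition origin : point := (0%R, 0%R).

Definition adj (p q : point) : bool := (absz (p.1 - q.1)%R + absz (p.2 - q.2)%R == 1)%N.
Definition unitv (d : point) : bool := adj origin d.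
Definition perp (d e : point) : bool := (d.1 * e.1 + d.2 * e.2 == 0)%R.

(* Since nodes occupy distinct grid points, a node is
   identified with the grid point it occupies.  A gshape is a list of
   occupied points and a list of edges (unordered: both orientations
   are read as the same edge).                                         *)
Record gshape := GShape { nodes : seq point; edges : seq (point * point) }.

Definition erel (S : gshape) (p q : point) : bool :=
  ((p, q) \in edges S) || ((q, p) \in edges S).

Definition connected_shape (S : gshape) : Prop :=
  forall p q, p \in nodes S -> q \in nodes S ->
    exists s : seq point, path (erel S) p s && (last p s == q).

Definition wf_shape (S : gshape) : Prop :=
  [/\ nodes S != [::], uniq (nodes S),
      (forall e, e \in edges S -> [/\ e.1 \in nodes S, e.2 \in nodes S & adj e.1 e.2])
    & connected_shape S].

Definition same_shape (S T : gshape) : Prop :=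
  exists v : point,
    (forall p, (p \in nodes S) = (padd p v \in nodes T)) /\
    (forall p q, erel S p q = erel T (padd p v) (padd q v)).

Definition AC (S : gshape) : gshape :=
  GShape (nodes S)
        (edges S ++ [seq (p, q) | p <- nodes S, q <- [seq q <- nodes S | adj p q]]).

(* All operations have the common cardinal direction d;
   ops is the set of nodes u receiving an operation (toward u + d).
   The operation on u is of type (ii) iff u has an edge to u + d.
   par/dep describe a spanning tree rooted at the anchor a (parent and
   depth); disp is the displacement of the old nodes.                  *)

(* the edge {x,y} is the edge operated on by a type-(ii) operation *)
Definition opd (ops : seq point) (d x y : point) : bool :=
  ((x \in ops) && (y == padd x d)) || ((y \in ops) && (x == padd y d)).

(* x is the farther endpoint (in the tree) of a type-(ii) operation
   on x - d toward x : the part hanging from x moves by +d *)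
Definition mover_plus (S : gshape) (ops : seq point) (dep : point -> nat) (d x : point) : bool :=
  (psub x d \in ops) && erel S (psub x d) x && (dep (psub x d) < dep x)%N.
(* x is the farther endpoint of a type-(ii) operation on x toward
   x + d : the part hanging from x moves by -d *)
Definition mover_minus (S : gshape) (ops : seq point) (dep : point -> nat) (d x : point) : bool :=
  (x \in ops) && erel S x (padd x d) && (dep (padd x d) < dep x)%N.

(* unit vectors contributed at node x by the operations whose moving
   part hangs from x *)
Definition contrib S ops dep d x : point :=
  pscale ((nat_of_bool (mover_plus S ops dep d x))%:Z
          - (nat_of_bool (mover_minus S ops dep d x))%:Z)%R d.

Definition fpos (disp : point -> point) (x : point) : point := padd x (disp x).

Definition rpos (x : point) (t : rat) (v : point) : rat * rat :=
  ((x.1%:~R + t * v.1%:~R)%R, (x.2%:~R + t * v.2%:~R)%R).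

Definition collision_free (S : gshape) (d : point) (ops : seq point)
  (disp : point -> point) : Prop :=
  (forall x y, x \in nodes S -> y \in nodes S -> x != y ->
     forall t : rat, (0 <= t)%R -> (t <= 1)%R -> rpos x t (disp x) != rpos y t (disp y)) /\
  (forall x u, x \in nodes S -> u \in ops -> fpos disp x != padd (fpos disp u) d) /\
  (forall u w, u \in ops -> w \in ops -> u != w ->
     padd (fpos disp u) d != padd (fpos disp w) d) /\
  (* no cycle is distorted: along every edge the relative displacement of
     its endpoints is the one prescribed by the operation on that edge
     (none, or one unit along the edge if the edge is operated on) *)
  (forall x y, erel S x y ->
     psub (fpos disp y) (fpos disp x) = pscale (1 + (nat_of_bool (opd ops d x y))%:Z)%R (psub y x)).

Definition end_shape (S : gshape) (d : point) (ops : seq point) (disp : point -> point) : gshape :=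
  let f := fpos disp in
  GShape (map f (nodes S) ++ map (fun u => padd (f u) d) ops)
        ([seq (f e.1, f e.2) | e <- [seq e <- edges S | ~~ opd ops d e.1 e.2]]
         ++ [seq (f u, padd (f u) d) | u <- ops]
         ++ [seq (padd (f u) d, f (padd u d)) | u <- [seq u <- ops | erel S u (padd u d)]]).

Definition step (a : point) (S S' : gshape) : Prop :=
  exists (d : point) (ops : seq point) (par : point -> point) (dep : point -> nat)
         (disp : point -> point),
    [/\ unitv d, a \in nodes S, uniq ops & {subset ops <= nodes S}] /\
    (dep a = 0%N /\
     forall x, x \in nodes S -> x != a ->
       [/\ par x \in nodes S, erel S x (par x) & dep x = (dep (par x)).+1]) /\
    (* displacement = sum of the contributions on the tree path to a *)
    (disp a = origin /\
     forall x, x \in nodes S -> x != a ->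
       disp x = padd (disp (par x)) (contrib S ops dep d x)) /\
    collision_free S d ops disp /\
    S' = end_shape S d ops disp.

(* Growth processes from a single node (the anchor, at the origin).
   adjm = false : connectivity graph model; adjm = true : adjacency
   graph model.  grows_in adjm S tf : the process grows S in tf steps. *)
Definition seed : gshape := GShape [:: origin] [::].

Definition grows_in (adjm : bool) (S : gshape) (tf : nat) : Prop :=
  exists B E : nat -> gshape,
    B 0%N = seed /\
    (forall t, (t < tf)%N ->
       step origin (B t) (E t) /\ B t.+1 = (if adjm then AC (E t) else E t)) /\
    same_shape (if tf is t.+1 then E t else seed) S.

Definition at_ (s : seq point) (i : nat) : point := nth origin s i.

Definition path_of (S : gshape) (s : seq point) : Prop :=
  [/\ s != [::], perm_eq s (nodes S) &
      forall p q, erel S p q =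
        ((p, q) \in zip s (behead s)) || ((q, p) \in zip s (behead s))].

Definition turning (s : seq point) (i : nat) : bool :=
  (i == 0%N) || (i == (size s).-1) ||
  perp (psub (at_ s i.-1) (at_ s i)) (psub (at_ s i.+1) (at_ s i)).

Definition turning_points (s : seq point) : seq nat :=
  [seq i <- iota 0 (size s) | turning s i].

Definition staircase (s : seq point) : Prop :=
  exists d1 d2 : point,
    [&& unitv d1, unitv d2 & perp d1 d2] /\
    let tp := turning_points s in
    forall k, (k.+1 < size tp)%N ->
      forall m, (nth 0%N tp k <= m < nth 0%N tp k.+1)%N ->
        psub (at_ s m.+1) (at_ s m) = (if odd k then d2 else d1).

From Pilot Require Import Defs.
From mathcomp Require Import all_boot all_order all_algebra.
From mathcomp Require Import zify ring lra.
Import Order.TTheory GRing.Theory Num.Theory.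
Set Implicit Arguments. Unset Strict Implicit. Unset Printing Implicit Defensive.
Local Open Scope ring_scope.

(* If the staircase uses the perpendicular unit directions d1 and d2, put
   e := d1 + d2.  The level <p, e> increases by exactly one along the
   staircase, so the staircase is a "diagonal line": one node on each level
   0..n-1 and edges exactly between consecutive levels.  Adjacency closure adds
   nothing to a diagonal line, so both models behave identically.

   Inside a straight run of length a we append one node and then
   double the grown part of the run at every step, so the run costs at most
   log a + 2 steps (section Run), and a path made of r runs costs at most
   r (log n + 2) steps (section Runs).  Consecutive runs of a staircase are
   separated by turning points (section Staircase), so r <= k; finally the
   completely grown prefix is the staircase up to translation. *)

Lemma unitv_cases (v : point) : unitv v ->
  v = (1, 0) \/ v = (-1, 0) \/ v = (0, 1) \/ v = (0, -1).
Proof.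
case: v => a b; rewrite /unitv /adj /origin /= => /eqP H.
have : (a = 1 /\ b = 0) \/ (a = -1 /\ b = 0) \/ (a = 0 /\ b = 1) \/ (a = 0 /\ b = -1)
  by lia.
by case=> [[-> ->]|[[-> ->]|[[-> ->]|[-> ->]]]]; auto.
Qed.

Definition level (e p : point) : int := p.1 * e.1 + p.2 * e.2.

Lemma levelD e p q : level e (padd p q) = level e p + level e q.
Proof. rewrite /level /padd /=; ring. Qed.

Lemma levelB e p q : level e (psub p q) = level e p - level e q.
Proof. rewrite /level /psub /=; ring. Qed.

Lemma levelZ e k p : level e (pscale k p) = k * level e p.
Proof. rewrite /level /pscale /=; ring. Qed.

Lemma level0 e : level e origin = 0.
Proof. by rewrite /level /origin /= !mul0r addr0. Qed.

Lemma diagonal_levels (d1 d2 : point) : unitv d1 -> unitv d2 -> perp d1 d2 ->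
  [/\ level (padd d1 d2) d1 = 1, level (padd d1 d2) d2 = 1 &
      forall v, unitv v -> level (padd d1 d2) v = 1 \/ level (padd d1 d2) v = -1].
Proof.
move=> /unitv_cases H1 /unitv_cases H2; rewrite /perp.
by case: H1 => [->|[->|[->|->]]]; case: H2 => [->|[->|[->|->]]] //= _;
  split => // v /unitv_cases [->|[->|[->|->]]]; auto.
Qed.

Lemma paddK (p v : point) : psub (padd p v) v = p.
Proof. case: p => a b; rewrite /padd /psub /=; congr (_, _); ring. Qed.

Lemma psubK (p v : point) : padd (psub p v) v = p.
Proof. case: p => a b; rewrite /padd /psub /=; congr (_, _); ring. Qed.

Lemma psub_scale_swap (k : int) p q r t :
  psub p q = pscale k (psub r t) -> psub q p = pscale k (psub t r).
Proof.
rewrite /psub /pscale /= => -[E1 E2]; congr (_, _); apply: oppr_inj.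
  by rewrite opprB E1 -mulrN opprB.
by rewrite opprB E2 -mulrN opprB.
Qed.

Lemma padd_pscale0 p v : padd p (pscale 0 v) = p.
Proof. by case: p => a b; rewrite /padd /pscale /= !mul0r !addr0. Qed.

Lemma pscaleD (a b : int) p : pscale (a + b) p = padd (pscale a p) (pscale b p).
Proof. rewrite /pscale /padd /=; congr (_, _); ring. Qed.

Lemma padd_pscale p (a b : int) v :
  padd (padd p (pscale a v)) (pscale b v) = padd p (pscale (a + b) v).
Proof. rewrite /padd /pscale /=; congr (_, _); ring. Qed.

Record diag_line (e : point) (S : gshape) (N : nat) : Prop := {
  dl_uniq : uniq (nodes S);
  dl_size : size (nodes S) = N.+1;
  dl_range : forall p, p \in nodes S -> 0 <= level e p <= N%:Z;
  dl_inj : forall p q, p \in nodes S -> q \in nodes S -> level e p = level e q -> p = q;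
  dl_origin : origin \in nodes S;
  dl_erel : forall p q, erel S p q = [&& p \in nodes S, q \in nodes S &
        (level e q == level e p + 1) || (level e p == level e q + 1)] }.

(* By counting, every level 0..N is occupied. *)
Lemma diag_line_onto e S N : diag_line e S N -> forall i : int, 0 <= i <= N%:Z ->
  exists2 p, p \in nodes S & level e p = i.
Proof.
case=> Hu Hs Hr Hi _ _ i Hi0.
pose s1 := map (level e) (nodes S).
pose s2 := map (fun n : nat => n%:Z) (iota 0 N.+1).
have u1 : uniq s1 by rewrite map_inj_in_uniq // => p q Hp Hq; apply: Hi.
have sub : {subset s1 <= s2}.
  move=> x /mapP [p Hp ->]; have := Hr p Hp => Hb.
  by apply/mapP; exists (absz (level e p)); [rewrite mem_iota|]; lia.
have [_ eqs] := uniq_min_size u1 sub (ltac:(by rewrite !size_map size_iota Hs)).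
have : i \in s2 by apply/mapP; exists (absz i); [rewrite mem_iota|]; lia.
by rewrite -eqs => /mapP [p Hp ->]; exists p.
Qed.

(* Adjacency closure only adds edges between points at distance one, i.e. on
   consecutive levels when every unit vector has level one or minus one; so a
   diagonal line is closed under it. *)
Lemma diag_line_AC e S N : diag_line e S N ->
  (forall v, unitv v -> level e v = 1 \/ level e v = -1) -> diag_line e (Defs.AC S) N.
Proof.
move=> R Hu; case: (R) => r1 r2 r3 r4 r5 r6; split => //.
have ext x y : (x, y) \in [seq (p, q) | p <- nodes S, q <- [seq q <- nodes S | adj p q]] ->
   [&& x \in nodes S, y \in nodes S & (level e y == level e x + 1) || (level e x == level e y + 1)].
  move=> /allpairsPdep [a [b [an]]]; rewrite mem_filter => /andP [ab bn] [-> ->].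
  have /Hu : unitv (psub b a) by move: ab; rewrite /unitv /adj /origin /psub /=; lia.
  by rewrite an bn levelB /= => -[] E; apply/orP; [left|right]; apply/eqP; lia.
move=> p q; apply/idP/idP.
- rewrite /erel /= !mem_cat => /orP [/orP [H|H]|/orP [H|H]].
  + by rewrite -r6 /erel H.
  + exact: ext H.
  + by rewrite -r6 /erel H orbT.
  + by case/and3P: (ext _ _ H) => -> -> /=; rewrite orbC.
- by rewrite -r6 /erel /= !mem_cat => /orP [] ->; rewrite ?orbT.
Qed.

Lemma count_lt_subpred (T : eqType) (a b : pred T) (s : seq T) u :
  subpred b a -> u \in s -> a u -> ~~ b u -> (count b s < count a s)%N.
Proof.
move=> ba; elim: s => //= x s IH; rewrite inE => /orP [/eqP <- au bu|us au bu].
  by rewrite au (negbTE bu) add0n add1n ltnS sub_count.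
by have := IH us au bu; case: (boolP (b x)) => [/ba ->|_] /=; lia.
Qed.

(* Each selected node
   u creates a new node just above it, so a node p moves by (below p) * d,
   where below p counts the selected nodes strictly under p. *)
Section GrowthStep.
Variables (e d : point) (S : gshape) (N : nat) (sel : pred point).
Hypothesis Hline : diag_line e S N.
Hypothesis Hd : level e d = 1.
Hypothesis Hsel : forall p, p \in nodes S -> sel p ->
  (padd p d \in nodes S) \/ level e p = N%:Z.

Local Notation lev := (level e).

Definition below (p : point) : nat :=
  count (fun r => sel r && (lev r < lev p)) (nodes S).

Definition new_level (p : point) : int := lev p + (below p)%:Z.

Definition grow_ops : seq point := filter sel (nodes S).
Definition grow_disp (p : point) : point := pscale (below p)%:Z d.

Definition tree_depth (p : point) : nat := absz (lev p).
Definition tree_parent (p : point) : point :=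
  nth origin (nodes S) (find (fun r => lev r == lev p - 1) (nodes S)).

Lemma below_mono p q : lev p <= lev q -> (below p <= below q)%N.
Proof. by move=> H; apply: sub_count => r /andP [-> /= h]; exact: lt_le_trans h H. Qed.

Lemma below_lt u p : u \in nodes S -> sel u -> lev u < lev p -> (below u < below p)%N.
Proof.
move=> un su lt; apply: (count_lt_subpred _ un) => /=; rewrite ?su ?lt ?ltxx ?andbF //.
by move=> r /andP [-> /= h]; exact: lt_trans h lt.
Qed.

Lemma below_total p : (below p <= count sel (nodes S))%N.
Proof. by apply: sub_count => r /andP []. Qed.

Lemma below_total_sel u : u \in nodes S -> sel u -> (below u < count sel (nodes S))%N.
Proof.
move=> un su; apply: (count_lt_subpred _ un); rewrite ?ltxx ?andbF //.
by move=> r /andP [].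
Qed.

Lemma below_origin : below origin = 0%N.
Proof.
rewrite /below (@eq_in_count _ _ pred0) ?count_pred0 // => r rn /=.
by have := dl_range Hline rn; rewrite level0; case: (sel r) => //=; lia.
Qed.

Lemma below_succ p q : p \in nodes S -> q \in nodes S -> lev q = lev p + 1 ->
  below q = (below p + sel p)%N.
Proof.
move=> pn qn E.
set a1 := (fun r => sel r && (lev r < lev p)).
set a2 := (fun r => sel r && (lev r == lev p)).
have U := count_predUI a1 a2 (nodes S).
have I0 : count (predI a1 a2) (nodes S) = 0%N.
  rewrite (eq_count (a2 := pred0)) ?count_pred0 // => x /=.
  by rewrite /a1 /a2; case: (ltgtP (lev x) (lev p)); rewrite ?andbF.
have A2 : count a2 (nodes S) = sel p.
  rewrite (@eq_in_count _ _ (fun r => sel p && (r == p))); last first.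
    move=> x xn /=; rewrite /a2; apply/andP/andP => [[sx /eqP ex]|[sp /eqP ->]].
      by have xp := dl_inj Hline xn pn ex; subst x; rewrite sx eqxx.
    by rewrite sp eqxx.
  case: (sel p); last by rewrite (eq_count (a2 := pred0)) ?count_pred0.
  by rewrite (eq_count (a2 := pred1 p)) // count_uniq_mem ?pn // (dl_uniq Hline).
have -> : below q = count (predU a1 a2) (nodes S).
  apply: eq_count => r /=; rewrite /a1 /a2 E.
  by case: (sel r) => //=; rewrite ltzD1 le_eqVlt orbC.
by move: U; rewrite I0 A2 addn0.
Qed.

Lemma new_level_le p q : lev p <= lev q -> new_level p <= new_level q.
Proof. by move=> H; have := below_mono H; rewrite /new_level; lia. Qed.

Lemma new_level_lt p q : lev p < lev q -> new_level p < new_level q.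
Proof. by move=> H; have := below_mono (ltW H); rewrite /new_level; lia. Qed.

Lemma new_level_inj p q : p \in nodes S -> q \in nodes S ->
  new_level p = new_level q -> p = q.
Proof.
move=> pn qn E; apply: (dl_inj Hline pn qn).
by case: (ltgtP (lev p) (lev q)) => // /new_level_lt; rewrite E ltxx.
Qed.

Lemma new_level_gap x u : x \in nodes S -> u \in nodes S -> sel u ->
  new_level x <> new_level u + 1.
Proof.
move=> xn un su; case: (lerP (lev x) (lev u)) => H.
  by have := new_level_le H; lia.
by have := below_lt un su H; rewrite /new_level; lia.
Qed.

Lemma succ_of_selected u y : u \in nodes S -> sel u -> y \in nodes S ->
  lev y = lev u + 1 -> y = padd u d.
Proof.
move=> un su yn E; case: (Hsel un su) => [H|H].
  by apply: (dl_inj Hline) => //; rewrite levelD Hd.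
by have := dl_range Hline yn; rewrite E H; lia.
Qed.

Lemma opd_sym (o : seq point) x y : opd o d x y = opd o d y x.
Proof. by rewrite /opd orbC. Qed.

Lemma opd_succ x y : x \in nodes S -> y \in nodes S -> lev y = lev x + 1 ->
  opd grow_ops d x y = sel x.
Proof.
move=> xn yn E; rewrite /opd /grow_ops !mem_filter xn yn !andbT.
have -> : (x == padd y d) = false.
  by apply/negbTE/eqP => H; move: E; rewrite H levelD Hd; lia.
rewrite andbF orbF; case sx: (sel x) => //=.
by apply/eqP; apply: succ_of_selected.
Qed.

Lemma new_level_old_old x y : x \in nodes S -> y \in nodes S ->
  new_level y = new_level x + 1 -> lev y = lev x + 1 /\ sel x = false.
Proof.
move=> xn yn E.
have E1 : lev y = lev x + 1.
  case: (lerP (lev y) (lev x)) => H; first by have := new_level_le H; lia.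
  case: (lerP (lev y) (lev x + 1)) => H2; first lia.
  by have := below_mono (ltW H); move: E; rewrite /new_level; lia.
split => //; have := below_succ xn yn E1; move: E; rewrite /new_level E1.
by case: (sel x) => //=; lia.
Qed.

Lemma new_level_new_old u y : u \in nodes S -> sel u -> y \in nodes S ->
  new_level y = new_level u + 2 -> lev y = lev u + 1.
Proof.
move=> un su yn E.
case: (lerP (lev y) (lev u)) => H; first by have := new_level_le H; lia.
case: (lerP (lev y) (lev u + 1)) => H2; first lia.
by have := below_lt un su H; move: E; rewrite /new_level; lia.
Qed.

Lemma grow_disp_level p : lev (fpos grow_disp p) = new_level p.
Proof. by rewrite /fpos /grow_disp levelD levelZ Hd mulr1. Qed.

Lemma grow_disp_origin : grow_disp origin = origin.
Proof. by rewrite /grow_disp below_origin /pscale /origin /= !mul0r. Qed.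

(* Only the origin is on level 0, so every other node has a parent one
   level below. *)
Lemma level_origin_neq x : x \in nodes S -> x != origin -> lev x != 0.
Proof.
move=> xn; apply: contraNneq => H; apply/eqP.
by apply: (dl_inj Hline xn (dl_origin Hline)); rewrite H level0.
Qed.

Lemma tree_parent_spec x : x \in nodes S -> x != origin ->
  tree_parent x \in nodes S /\ lev (tree_parent x) = lev x - 1.
Proof.
move=> xn xo; have H0 := level_origin_neq xn xo.
have Hr := dl_range Hline xn.
have [r rn rE] := diag_line_onto Hline (i := lev x - 1) ltac:(move: H0 Hr; lia).
have Hh : has (fun r => lev r == lev x - 1) (nodes S).
  by apply/hasP; exists r => //; apply/eqP.
split; first by rewrite /tree_parent mem_nth // -has_find.
by apply/eqP; exact: (nth_find origin Hh).
Qed.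

Lemma mover_minus_false x : x \in nodes S ->
  mover_minus S grow_ops tree_depth d x = false.
Proof.
move=> xn; rewrite /mover_minus /tree_depth levelD Hd.
have Hr := dl_range Hline xn.
have -> : (absz (lev x + 1)%R < absz (lev x))%N = false by apply/negbTE; lia.
by rewrite andbF.
Qed.

Lemma mover_plus_parent x : x \in nodes S -> x != origin ->
  mover_plus S grow_ops tree_depth d x = sel (tree_parent x).
Proof.
move=> xn xo; have [pn pE] := tree_parent_spec xn xo.
have H0 := level_origin_neq xn xo; have Hr := dl_range Hline xn.
rewrite /mover_plus; case sp: (sel (tree_parent x)).
  have xE : x = padd (tree_parent x) d by apply: succ_of_selected => //; rewrite pE; ring.
  rewrite {1 2 4}xE paddK /grow_ops mem_filter sp pn /= (dl_erel Hline) pn xn pE /=.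
  by rewrite /tree_depth pE subrK eqxx /=; move: Hr H0; lia.
apply/negbTE/andP => [[/andP [H1 _] _]].
move: H1; rewrite /grow_ops mem_filter => /andP [sx xdn].
have E : psub x d = tree_parent x by apply: (dl_inj Hline) => //; rewrite levelB Hd pE.
by move: sx; rewrite E sp.
Qed.

Lemma grow_disp_tree x : x \in nodes S -> x != origin ->
  grow_disp x = padd (grow_disp (tree_parent x)) (contrib S grow_ops tree_depth d x).
Proof.
move=> xn xo; have [pn pE] := tree_parent_spec xn xo.
rewrite /contrib mover_plus_parent // mover_minus_false // subr0 /grow_disp.
by rewrite (below_succ pn xn) ?PoszD ?pscaleD // pE; ring.
Qed.

Lemma grow_tree : tree_depth origin = 0%N /\
  forall x, x \in nodes S -> x != origin ->
    [/\ tree_parent x \in nodes S, erel S x (tree_parent x) &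
        tree_depth x = (tree_depth (tree_parent x)).+1].
Proof.
split; first by rewrite /tree_depth level0.
move=> x xn xo; have [pn pE] := tree_parent_spec xn xo.
have H0 := level_origin_neq xn xo; have Hr := dl_range Hline xn.
split => //; first by rewrite (dl_erel Hline) xn pn pE subrK eqxx orbT.
by rewrite /tree_depth pE; move: Hr H0; lia.
Qed.

Lemma rpos_level x (t : rat) (c : int) :
  let r := rpos x t (pscale c d) in
  r.1 * (e.1)%:~R + r.2 * (e.2)%:~R = (lev x)%:~R + t * c%:~R.
Proof.
have Hd' : (d.1)%:~R * (e.1)%:~R + (d.2)%:~R * (e.2)%:~R = 1 :> rat.
  by rewrite -!intrM -intrD; move: Hd; rewrite /level => ->.
rewrite /= /pscale /level /= !intrD !intrM.
have -> : t * c%:~R = t * c%:~R * ((d.1)%:~R * (e.1)%:~R + (d.2)%:~R * (e.2)%:~R) :> rat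
  by rewrite Hd' mulr1.
ring.
Qed.

(* Nodes on distinct levels stay on distinct (real) levels during the motion,
   because a higher node never moves less than a lower one. *)
Lemma grow_no_collision x y (t : rat) : x \in nodes S -> y \in nodes S -> x != y ->
  0 <= t -> rpos x t (grow_disp x) != rpos y t (grow_disp y).
Proof.
wlog lt : x y / lev x < lev y.
  move=> W xn yn xy t0; case: (ltgtP (lev x) (lev y)) => H; first exact: W.
    by rewrite eq_sym; apply: W; rewrite // eq_sym.
  by move: xy; rewrite (dl_inj Hline xn yn H) eqxx.
move=> xn yn _ t0; apply/eqP => E.
have := congr1 (fun r : rat * rat => r.1 * (e.1)%:~R + r.2 * (e.2)%:~R) E.
rewrite /= /grow_disp !rpos_level.
have H1 : (lev x)%:~R + 1 <= (lev y)%:~R :> rat.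
  by rewrite -[1]/(1%:~R) -intrD ler_int; move: lt; lia.
have H2 : (below x)%:~R <= (below y)%:~R :> rat.
  by rewrite ler_int; have := below_mono (ltW lt); lia.
have H3 : 0 <= t * ((below y)%:~R - (below x)%:~R) :> rat by apply: mulr_ge0; lra.
by rewrite mulrBr in H3; lra.
Qed.

Lemma grow_edge_succ x y : x \in nodes S -> y \in nodes S -> lev y = lev x + 1 ->
  psub (fpos grow_disp y) (fpos grow_disp x) =
  pscale (1 + (nat_of_bool (opd grow_ops d x y))%:Z)%R (psub y x).
Proof.
move=> xn yn E; rewrite opd_succ // /fpos /grow_disp (below_succ xn yn E).
case sx: (sel x) => /=.
  have -> : y = padd x d by apply: succ_of_selected.
  by rewrite /psub /padd /pscale /= PoszD; congr (_, _); ring.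
by rewrite addn0 /psub /padd /pscale /=; congr (_, _); ring.
Qed.

Lemma grow_edge x y : erel S x y ->
  psub (fpos grow_disp y) (fpos grow_disp x) =
  pscale (1 + (nat_of_bool (opd grow_ops d x y))%:Z)%R (psub y x).
Proof.
rewrite (dl_erel Hline) => /and3P [xn yn /orP [/eqP E|/eqP E]].
  exact: grow_edge_succ.
by rewrite opd_sym; apply: psub_scale_swap; exact: grow_edge_succ.
Qed.

Lemma grow_collision_free : collision_free S d grow_ops grow_disp.
Proof.
split; first by move=> x y xn yn xy t t0 _; apply: grow_no_collision.
split.
  move=> x u xn; rewrite /grow_ops mem_filter => /andP [su un]; apply/eqP => E.
  by apply: (new_level_gap xn un su); rewrite -!grow_disp_level E levelD Hd.
split; last exact: grow_edge.
move=> u w; rewrite /grow_ops !mem_filter => /andP [su un] /andP [sw wn].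
apply: contraNneq => E; apply/eqP/new_level_inj => //.
have := congr1 lev E.
by rewrite (levelD e (fpos _ u)) (levelD e (fpos _ w)) !grow_disp_level => /addIr.
Qed.

Local Notation S' := (end_shape S d grow_ops grow_disp).
Local Notation f := (fpos grow_disp).

Lemma new_node_level u : lev (padd (f u) d) = new_level u + 1.
Proof. by rewrite (levelD e (f u)) grow_disp_level Hd. Qed.

Lemma end_nodes_cases P : P \in nodes S' ->
  (exists2 x, x \in nodes S & P = f x) \/
  (exists2 u, (u \in nodes S) && sel u & P = padd (f u) d).
Proof.
rewrite /= mem_cat => /orP [/mapP [x xn ->]|/mapP [u]]; first by left; exists x.
by rewrite /grow_ops mem_filter andbC => un ->; right; exists u.
Qed.

Lemma end_node_old x : x \in nodes S -> f x \in nodes S'.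
Proof. by move=> xn; rewrite /= mem_cat map_f. Qed.

Lemma end_node_new u : u \in nodes S -> sel u -> padd (f u) d \in nodes S'.
Proof.
move=> un su; rewrite /= mem_cat; apply/orP; right.
by apply/mapP; exists u => //; rewrite /grow_ops mem_filter su.
Qed.

Lemma end_edge_levels P Q : (P, Q) \in edges S' ->
  [&& P \in nodes S', Q \in nodes S' & (lev Q == lev P + 1) || (lev P == lev Q + 1)].
Proof.
move=> H; rewrite /= !mem_cat in H; case/or3P: H => [/mapP [[a b]]|/mapP [u]|/mapP [u]].
- rewrite mem_filter /= => /andP [nop ab] [-> ->].
  have : erel S a b by rewrite /erel ab.
  rewrite (dl_erel Hline) => /and3P [an bn /orP [/eqP E|/eqP E]].
    rewrite !end_node_old //= !grow_disp_level.
    have := below_succ an bn E; rewrite -(opd_succ an bn E) (negbTE nop) addn0.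
    by rewrite /new_level E => ->; apply/orP; left; apply/eqP; ring.
  rewrite !end_node_old //= !grow_disp_level.
  have := below_succ bn an E; rewrite -(opd_succ bn an E) opd_sym (negbTE nop) addn0.
  by rewrite /new_level E => ->; apply/orP; right; apply/eqP; ring.
- rewrite /grow_ops mem_filter => /andP [su un] [-> ->].
  by rewrite end_node_old // end_node_new // new_node_level grow_disp_level eqxx.
- rewrite !mem_filter => /andP [er /andP [su un]] [-> ->].
  move: er; rewrite (dl_erel Hline) => /and3P [_ udn _].
  have E : lev (padd u d) = lev u + 1 by rewrite levelD Hd.
  rewrite end_node_new // end_node_old // new_node_level grow_disp_level.
  rewrite /new_level (below_succ un udn E) E su.
  by apply/orP; left; apply/eqP; rewrite -[(below u + true)%N]/(below u + 1)%N PoszD; ring.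
Qed.

Lemma end_edge_complete P Q : P \in nodes S' -> Q \in nodes S' -> lev Q = lev P + 1 ->
  ((P, Q) \in edges S') || ((Q, P) \in edges S').
Proof.
move=> /end_nodes_cases [[x xn ->]|[u /andP [un su] ->]]
       /end_nodes_cases [[y yn ->]|[w /andP [wn sw] ->]].
- rewrite !grow_disp_level => E; have [E1 sx] := new_level_old_old xn yn E.
  have nop : opd grow_ops d x y = false by rewrite opd_succ.
  have : erel S x y by rewrite (dl_erel Hline) xn yn E1 eqxx.
  rewrite /erel => /orP [xy|yx]; apply/orP; [left|right]; rewrite /= !mem_cat; apply/orP; left.
    by apply/mapP; exists (x, y) => //; rewrite mem_filter /= nop xy.
  by apply/mapP; exists (y, x) => //; rewrite mem_filter /= opd_sym nop yx.
- rewrite grow_disp_level new_node_level => /(addIr 1) E.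
  have wx := new_level_inj wn xn E; subst w.
  apply/orP; left; rewrite /= !mem_cat; apply/orP; right; apply/orP; left.
  by apply/mapP; exists x => //; rewrite /grow_ops mem_filter sw.
- rewrite grow_disp_level new_node_level => E.
  have E2 := new_level_new_old un su yn (etrans E (esym (addrA _ _ _))).
  have yE := succ_of_selected un su yn E2; subst y.
  apply/orP; left; rewrite /= !mem_cat; apply/orP; right; apply/orP; right.
  apply/mapP; exists u => //; rewrite !mem_filter su un andbT.
  by rewrite (dl_erel Hline) un yn E2 eqxx.
- by rewrite !new_node_level => /(addIr 1) E; exfalso; apply: (new_level_gap wn un su).
Qed.

Lemma end_level_inj P Q : P \in nodes S' -> Q \in nodes S' -> lev P = lev Q -> P = Q.
Proof.
move=> /end_nodes_cases [[x xn ->]|[u /andP [un su] ->]]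
       /end_nodes_cases [[y yn ->]|[w /andP [wn sw] ->]].
- by rewrite !grow_disp_level => /(new_level_inj xn yn) ->.
- by rewrite grow_disp_level new_node_level => E; exfalso; apply: (new_level_gap xn wn sw).
- by rewrite grow_disp_level new_node_level => E; exfalso; apply: (new_level_gap yn un su).
- by rewrite !new_node_level => /(addIr 1) /(new_level_inj un wn) ->.
Qed.

Lemma end_nodes_uniq : uniq (nodes S').
Proof.
have Hu := dl_uniq Hline.
rewrite /= cat_uniq (map_inj_in_uniq (f := f)); last first.
  by move=> x y xn yn E; apply: new_level_inj; rewrite // -!grow_disp_level E.
rewrite map_inj_in_uniq ?filter_uniq //; last first.
  move=> u w; rewrite /grow_ops !mem_filter => /andP [_ un] /andP [_ wn] E.
  by apply: new_level_inj => //; apply/(addIr 1); rewrite -!new_node_level E.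
rewrite Hu andbT /=; apply/hasPn => P /mapP [u].
rewrite /grow_ops mem_filter => /andP [su un] ->.
apply/negP => /mapP [x xn E]; apply: (new_level_gap xn un su).
by rewrite -new_node_level E grow_disp_level.
Qed.

Lemma grow_diag_line : diag_line e S' (N + count sel (nodes S)).
Proof.
split.
- exact: end_nodes_uniq.
- by rewrite /= size_cat !size_map size_filter (dl_size Hline) addSn.
- move=> P /end_nodes_cases [[x xn ->]|[u /andP [un su] ->]].
    rewrite grow_disp_level /new_level.
    by have := dl_range Hline xn; have := below_total x; lia.
  rewrite new_node_level /new_level.
  by have := dl_range Hline un; have := below_total_sel un su; lia.
- exact: end_level_inj.
- have <- : f origin = origin by rewrite /fpos grow_disp_origin /padd /origin /= !addr0.
  exact/end_node_old/(dl_origin Hline).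
- move=> P Q; apply/idP/idP.
    rewrite /erel => /orP [/end_edge_levels //|/end_edge_levels /and3P [Qn Pn E]].
    by rewrite Pn Qn orbC.
  move=> /and3P [Pn Qn /orP [/eqP E|/eqP E]]; first by apply: end_edge_complete.
  by rewrite /erel orbC; apply: end_edge_complete.
Qed.

Hypothesis Hud : unitv d.

Lemma grow_step : step origin S (end_shape S d grow_ops grow_disp).
Proof.
exists d, grow_ops, tree_parent, tree_depth, grow_disp; split.
  split => //; first exact: dl_origin Hline.
    by rewrite /grow_ops filter_uniq // (dl_uniq Hline).
  by move=> u; rewrite /grow_ops mem_filter => /andP [].
split; first exact: grow_tree.
split; first by split; [exact: grow_disp_origin | exact: grow_disp_tree].
by split; first exact: grow_collision_free.
Qed.

End GrowthStep.

Definition line_prefix (e : point) (q : nat -> point) (S : gshape) (N : nat) : Prop :=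
  diag_line e S N /\ forall p, p \in nodes S -> p = q (absz (level e p)).

Lemma prefix_node e q S N j : line_prefix e q S N -> (j <= N)%N ->
  q j \in nodes S /\ level e (q j) = j%:Z.
Proof.
move=> [R Hq] jN; have [r rn rE] := diag_line_onto R (i := j%:Z) ltac:(lia).
by have := Hq r rn; rewrite rE /= => <-.
Qed.

Lemma count_levels e S N (selI : pred nat) : diag_line e S N ->
  count (fun p => selI (absz (level e p))) (nodes S) = count selI (iota 0 N.+1).
Proof.
move=> R; rewrite -(count_map (fun p => absz (level e p))).
apply/permP/uniq_perm; rewrite ?iota_uniq //.
- rewrite map_inj_in_uniq ?(dl_uniq R) // => x y xn yn E.
  by apply: (dl_inj R) => //; have := dl_range R xn; have := dl_range R yn; lia.
- move=> i; rewrite mem_iota add0n; apply/mapP/idP => [[p pn ->]|H].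
    by have := dl_range R pn; lia.
  have [p pn pE] := diag_line_onto R (i := i%:Z) ltac:(lia).
  by exists p => //; rewrite pE.
Qed.

Section PrefixStep.
Variables (e d : point) (q : nat -> point) (S : gshape) (N lo hi : nat) (selI : pred nat).
Hypothesis HP : line_prefix e q S N.
Hypothesis Hd : level e d = 1.
Hypothesis Hud : unitv d.
Hypothesis Hunits : forall v, unitv v -> level e v = 1 \/ level e v = -1.
Hypothesis Hlo : (lo <= N)%N.
Hypothesis Hstraight : forall j : nat, (lo <= j <= hi)%N ->
  q j = padd (q lo) (pscale (j%:Z - lo%:Z) d).
Hypothesis HselI : forall i, selI i -> (lo <= i <= N)%N.
Hypothesis Hhi : (N + count selI (iota 0 N.+1) <= hi)%N.

Local Notation lev := (level e).
Let sel := fun p => selI (absz (lev p)).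
Let Hline := proj1 HP.

(* A selected node is either the top node or has its d-neighbour in S,
   since the target is straight above lo. *)
Lemma prefix_sel_succ p : p \in nodes S -> sel p -> (padd p d \in nodes S) \/ lev p = N%:Z.
Proof.
move=> pn sp; have Hr := dl_range Hline pn; have Hb := HselI sp.
case: (ltnP (absz (lev p)) N) => H; last by right; lia.
left; have pE := proj2 HP p pn.
have -> : padd p d = q (absz (lev p)).+1.
  rewrite {1}pE (Hstraight (j := absz (lev p))) ?(Hstraight (j := (absz (lev p)).+1));
    try lia.
  by rewrite /padd /pscale /=; congr (_, _); rewrite -addrA; congr (_ + _); lia.
by case: (prefix_node HP H).
Qed.

Lemma on_straight_piece P (k : int) : P = padd (q lo) (pscale k d) -> 0 <= k ->
  lev P <= hi%:Z -> P = q (absz (lev P)).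
Proof.
move=> PE k0 Phi; have [_ qlo] := prefix_node HP Hlo.
have phP : lev P = lo%:Z + k by rewrite PE levelD levelZ Hd qlo mulr1.
rewrite (Hstraight (j := absz (lev P))); last by lia.
by rewrite phP {1}PE; congr (padd _ (pscale _ _)); lia.
Qed.

Local Notation S' := (end_shape S d (grow_ops S sel) (grow_disp e d S sel)).

(* Every node of the grown shape is the target point of its level: nodes
   below lo do not move, all others stay on the straight piece. *)
Lemma grown_on_target P : P \in nodes S' -> P = q (absz (lev P)).
Proof.
have R' := grow_diag_line Hline Hd prefix_sel_succ.
move=> Pn; have PR := dl_range R' Pn.
have Phi : lev P <= hi%:Z by rewrite (count_levels _ Hline) in PR; move: PR Hhi; lia.
case: (end_nodes_cases Pn) => [[x xn PE]|[u /andP [un su] PE]].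
  have xE := proj2 HP x xn.
  case c0: (below e S sel x == 0)%N.
    by rewrite PE /fpos /grow_disp (eqP c0) /padd /pscale /= !mul0r !addr0 -surjective_pairing.
  have /hasP [r rn /andP [sr rx]] : has (fun r => sel r && (lev r < lev x)) (nodes S).
    by rewrite has_count lt0n c0.
  have := HselI sr; have := dl_range Hline rn; have := dl_range Hline xn => Hx Hr Hb.
  apply: (on_straight_piece (k := (absz (lev x))%:Z - lo%:Z + (below e S sel x)%:Z)) => //;
    last by lia.
  by rewrite PE /fpos /grow_disp -padd_pscale -(Hstraight (j := absz (lev x))) -?xE //; lia.
have uE := proj2 HP u un.
have := HselI su; have := dl_range Hline un => Hu Hb.
apply: (on_straight_piece (k := (absz (lev u))%:Z - lo%:Z + (below e S sel u)%:Z + 1)) => //;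
  last by lia.
rewrite PE /fpos /grow_disp {1}uE (Hstraight (j := absz (lev u))); last by lia.
by rewrite /padd /pscale /=; congr (_, _); ring.
Qed.

Lemma prefix_step : exists S', step origin S S' /\
  line_prefix e q S' (N + count selI (iota 0 N.+1)) /\
  line_prefix e q (Defs.AC S') (N + count selI (iota 0 N.+1)).
Proof.
have R' := grow_diag_line Hline Hd prefix_sel_succ.
rewrite (count_levels _ Hline) in R'.
exists S'; split; first exact: grow_step Hline Hd prefix_sel_succ Hud.
split; split; [exact: R' | exact: grown_on_target | | exact: grown_on_target].
exact: diag_line_AC R' Hunits.
Qed.

End PrefixStep.

Definition reaches (adjm : bool) (e : point) (q : nat -> point) (N t : nat) : Prop :=
  exists B E : nat -> gshape,
    [/\ B 0%N = seed,
        (forall t', (t' < t)%N -> step origin (B t') (E t') /\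
           B t'.+1 = (if adjm then Defs.AC (E t') else E t')),
        line_prefix e q (B t) N &
        line_prefix e q (if t is t'.+1 then E t' else seed) N].

Lemma prefix_seed e q : q 0%N = origin -> line_prefix e q seed 0.
Proof.
move=> q0; split; last by move=> p /=; rewrite inE => /eqP ->; rewrite level0.
split => //=.
- by move=> p; rewrite inE => /eqP ->; rewrite level0.
- by move=> p r; rewrite !inE => /eqP -> /eqP ->.
- move=> p r; rewrite /erel /= !inE.
  by case: (p =P origin) => [->|]; case: (r =P origin) => [->|] //=; rewrite level0.
Qed.

Lemma reaches_seed adjm e q : q 0%N = origin -> reaches adjm e q 0 0.
Proof.
by move=> q0; exists (fun _ => seed), (fun _ => seed); split => //; exact: prefix_seed.
Qed.

Lemma reaches_step adjm e q N N' t : reaches adjm e q N t ->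
  (forall S, line_prefix e q S N -> exists S', step origin S S' /\
     line_prefix e q S' N' /\ line_prefix e q (Defs.AC S') N') ->
  reaches adjm e q N' t.+1.
Proof.
move=> [B [E [B0 Hst HB HE]]] H.
have [S' [st [P1 P2]]] := H _ HB.
exists (fun i => if (i <= t)%N then B i else (if adjm then Defs.AC S' else S')),
       (fun i => if (i < t)%N then E i else S'); split => //=.
- move=> t' lt; case: (ltnP t' t) => H1; first by rewrite ltnW //; apply: Hst.
  have -> : t' = t by lia.
  by rewrite leqnn.
- by rewrite ltnn; case: (adjm).
- by rewrite ltnn.
Qed.

Lemma count_window lo x n :
  count (fun i => (lo <= i < lo + x)%N) (iota 0 n) = minn x (n - lo).
Proof.
elim: n => [|n IH]; first by rewrite /= minn0.
rewrite -addn1 iotaD count_cat IH /= add0n addn0.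
by case: (leqP lo n) => H /=; [case: (ltnP n (lo + x)) => H2 /=|]; lia.
Qed.

Section Run.
Variables (adjm : bool) (e d : point) (q : nat -> point) (N a : nat).
Hypothesis Hd : level e d = 1.
Hypothesis Hud : unitv d.
Hypothesis Hunits : forall v, unitv v -> level e v = 1 \/ level e v = -1.
Hypothesis Hrun : forall i, (N <= i < N + a)%N -> q i.+1 = padd (q i) d.

Lemma run_line lo j : (N <= lo)%N -> (lo <= j <= N + a)%N ->
  q j = padd (q lo) (pscale (j%:Z - lo%:Z) d).
Proof.
move=> Nlo; elim: j => [|j IH] Hj.
  have -> : lo = 0%N by lia.
  by rewrite subrr padd_pscale0.
case: (eqVneq lo j.+1) => [->|ne]; first by rewrite subrr padd_pscale0.
rewrite Hrun ?IH; try lia.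
by rewrite /padd /pscale /=; congr (_, _); rewrite -[j.+1]addn1 PoszD; ring.
Qed.

Lemma run_append t : (0 < a)%N -> reaches adjm e q N t -> reaches adjm e q N.+1 t.+1.
Proof.
move=> a0 R; apply: (reaches_step R) => S HP.
have := @prefix_step e d q S N N (N + 1) (fun i => (N <= i < N + 1)%N)
  HP Hd Hud Hunits (leqnn N).
rewrite count_window (_ : minn 1 (N.+1 - N) = 1%N); last by lia.
by rewrite addn1; apply => [j Hj|i|]; [apply: run_line|..]; lia.
Qed.

(* Once h >= 1 nodes of the run exist, selecting the top min(h, a - h) of them
   extends the run by that many nodes. *)
Lemma run_extend t h : (0 < h < a)%N -> reaches adjm e q (N + h) t ->
  reaches adjm e q (N + h + minn h (a - h)) t.+1.
Proof.
move=> ha R; apply: (reaches_step R) => S HP.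
set x := minn h (a - h).
have := @prefix_step e d q S (N + h) (N + h - x) (N + h + x)
  (fun i => (N + h - x <= i < N + h - x + x)%N) HP Hd Hud Hunits ltac:(lia).
rewrite count_window (_ : minn x ((N + h).+1 - (N + h - x)) = x); last by lia.
by apply => [j Hj|i|]; [apply: run_line|..]; lia.
Qed.

Lemma run_double ee : forall h t, (0 < h <= a)%N -> (a <= 2 ^ ee * h)%N ->
  reaches adjm e q (N + h) t -> exists2 t', (t' <= t + ee)%N & reaches adjm e q (N + a) t'.
Proof.
elim: ee => [|ee IH] h t Hh Ha R.
  have -> : a = h by move: Ha Hh; rewrite expn0 mul1n; lia.
  by exists t => //; rewrite addn0.
case: (eqVneq h a) => [<-|hna]; first by exists t => //; lia.
have R' := run_extend (ltac:(lia) : (0 < h < a)%N) R.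
have Ha' : (a <= 2 ^ ee * (h + minn h (a - h)))%N.
  have P0 : (0 < 2 ^ ee)%N by rewrite expn_gt0.
  rewrite /minn; case: ifP => _; first by move: Ha; rewrite expnS mulnDr; nia.
  by rewrite subnKC; [rewrite leq_pmull|lia].
have [t' Ht' R''] := IH (h + minn h (a - h))%N t.+1 ltac:(lia) Ha' ltac:(by rewrite addnA).
by exists t' => //; lia.
Qed.

Lemma run_full t : (0 < a)%N -> reaches adjm e q N t ->
  exists2 t', (t' <= t + (trunc_log 2 a).+2)%N & reaches adjm e q (N + a) t'.
Proof.
move=> a0 R; have R1 := run_append a0 R.
have Hlog := @trunc_log_ltn 2 a isT.
have [t' H1 H2] := @run_double (trunc_log 2 a).+1 1 t.+1 ltac:(lia)
  ltac:(rewrite muln1; exact: ltnW) ltac:(by rewrite addn1).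
by exists t' => //; lia.
Qed.

End Run.

Section Runs.
Variables (adjm : bool) (e : point) (q : nat -> point) (M : nat) (W : nat -> point).
Hypothesis Hunits : forall v, unitv v -> level e v = 1 \/ level e v = -1.
Hypothesis HW : forall i, (i < M)%N -> unitv (W i) /\ level e (W i) = 1.
Hypothesis Hq : forall i, (i < M)%N -> q i.+1 = padd (q i) (W i).

Definition run_cost : nat := (trunc_log 2 M).+2.

Definition changes (N : nat) : nat :=
  count (fun i => W i.-1 != W i) (iota N.+1 (M - N.+1)).

Lemma maximal_run N : (N < M)%N -> exists a : nat,
  [/\ (0 < a)%N, (N + a <= M)%N, forall j, (0 < j < a)%N -> W (N + j) = W N
    & (N + a < M)%N -> W (N + a) != W N].
Proof.
move=> NM.
pose P j := (0 < j)%N && ((M <= N + j)%N || (W (N + j) != W N)).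
have PM : P (M - N)%N by rewrite /P; apply/andP; split; [lia|apply/orP; left; lia].
case: (ex_minnP (ex_intro P _ PM)) => a /andP [a0 Pa] amin.
have aM : (N + a <= M)%N by move/amin: PM; lia.
exists a; split => //.
  move=> j Hj; case Pj : (P j); first by have := amin j Pj; lia.
  by move: Pj; rewrite /P; case/andP: Hj => -> _ /= /norP [_ /negPn /eqP].
by move=> NaM; move: Pa; rewrite leqNgt NaM.
Qed.

Lemma changes_after_run N a : (0 < a)%N -> (N + a < M)%N ->
  (forall j, (0 < j < a)%N -> W (N + j) = W N) -> W (N + a) != W N ->
  (1 + changes (N + a) <= changes N)%N.
Proof.
move=> a0 NaM inrun Wneq; rewrite /changes.
have -> : (M - N.+1 = (a - 1) + 1 + (M - (N + a).+1))%N by lia.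
rewrite !iotaD !count_cat.
have -> : (N.+1 + (a - 1) = N + a)%N by lia.
have -> : (N.+1 + (a - 1 + 1) = (N + a).+1)%N by lia.
rewrite /= addn0.
have -> : W (N + a).-1 = W N.
  case: (eqVneq a 1%N) => [->|an1]; first by rewrite addn1.
  have -> : (N + a).-1 = (N + (a - 1))%N by lia.
  by apply: inrun; lia.
by rewrite eq_sym Wneq; lia.
Qed.

Lemma grow_runs n : forall N t, (M - N <= n)%N -> (N <= M)%N -> reaches adjm e q N t ->
  exists2 t', (t' <= t + (1 + changes N) * run_cost)%N & reaches adjm e q M t'.
Proof.
elim: n => [|n IH] N t Hn NM R.
  have -> : M = N by lia.
  by exists t => //; rewrite leq_addr.
case: (eqVneq N M) => [E|NnM]; first by subst N; exists t => //; rewrite leq_addr.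
have [a [a0 aM inrun aend]] := maximal_run (ltac:(lia) : (N < M)%N).
have [Hud Hd] := HW (ltac:(lia) : (N < M)%N).
have Hrun : forall i, (N <= i < N + a)%N -> q i.+1 = padd (q i) (W N).
  move=> i Hi; rewrite Hq; last lia.
  case: (eqVneq i N) => [->//|iN].
  have -> : i = (N + (i - N))%N by lia.
  by rewrite inrun //; lia.
have [t1 Ht1 R1] := run_full Hd Hud Hunits Hrun a0 R.
have Hlog : (trunc_log 2 a <= trunc_log 2 M)%N by apply: leq_trunc_log; lia.
case: (eqVneq (N + a)%N M) => [E|NaM'].
  by exists t1; [rewrite /run_cost; nia | rewrite -E].
have NaM : (N + a < M)%N by rewrite ltn_neqAle NaM' aM.
have Wneq := aend NaM.
have [t' Ht' R'] := IH (N + a)%N t1 ltac:(lia) aM R1.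
have Hch := changes_after_run a0 NaM inrun Wneq.
by exists t' => //; apply: (leq_trans Ht'); move: Ht1 Hch; rewrite /run_cost; nia.
Qed.

End Runs.

Lemma sorted_bracket (s : seq nat) m : sorted ltn s ->
  (exists2 x, x \in s & (x <= m)%N) -> (exists2 y, y \in s & (m < y)%N) ->
  exists k, (k.+1 < size s)%N /\ (nth 0 s k <= m < nth 0 s k.+1)%N.
Proof.
elim: s => [|x s IH] /=; first by move=> _ [].
move=> Hs [z zin zm] [y yin my].
have Hmin : forall w, w \in s -> (x < w)%N by apply/allP/(order_path_min ltn_trans Hs).
case: (leqP x m) => xm; last first.
  by case/orP: zin => [/eqP E|/Hmin]; lia.
case: s IH Hs Hmin yin {zin} => [|u s'] IH Hs Hmin yin.
  by move: yin; rewrite inE => /eqP E; lia.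
case: (ltnP m u) => mu; first by exists 0%N; split => //=; lia.
have Hs' : sorted ltn (u :: s') by case/andP: Hs.
have [k [H1 H2]] := IH Hs' (ex_intro2 _ _ u (mem_head u s') mu)
  ltac:(case/orP: (yin) => [/eqP E|yin']; [lia|by exists y]).
by exists k.+1.
Qed.

Lemma perp_oppl a b : perp (psub origin a) b = perp a b.
Proof.
rewrite /perp /psub /origin /=.
have -> : (0 - a.1) * b.1 + (0 - a.2) * b.2 = - (a.1 * b.1 + a.2 * b.2) by ring.
by rewrite oppr_eq0.
Qed.

Lemma perp_sym a b : perp a b = perp b a.
Proof. by rewrite /perp mulrC [a.2 * _]mulrC. Qed.

Section Staircase.
Variables (s : seq point) (d1 d2 : point).
Hypothesis Hs0 : s != [::].
Hypothesis Hd1 : unitv d1.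
Hypothesis Hd2 : unitv d2.
Hypothesis Hperp : perp d1 d2.
Let tp := turning_points s.
Hypothesis Hst : forall k, (k.+1 < size tp)%N ->
  forall m, (nth 0%N tp k <= m < nth 0%N tp k.+1)%N ->
    psub (at_ s m.+1) (at_ s m) = (if odd k then d2 else d1).

Let M := (size s).-1.

Definition step_dir (i : nat) : point := psub (at_ s i.+1) (at_ s i).

Lemma size_staircase : size s = M.+1.
Proof. by rewrite /M; case: (s) Hs0. Qed.

(* Every step lies between two consecutive turning points, so it is d1 or d2. *)
Lemma step_dir_cases m : (m < M)%N -> step_dir m = d1 \/ step_dir m = d2.
Proof.
move=> mM.
have Hsort : sorted ltn tp.
  by apply: sorted_filter; [exact: ltn_trans | exact: iota_ltn_sorted].
have H0 : 0%N \in tp by rewrite /tp /turning_points mem_filter mem_iota size_staircase.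
have HM : M \in tp.
  rewrite /tp /turning_points mem_filter mem_iota size_staircase /turning.
  by rewrite (_ : (size s).-1 = M) // eqxx orbT /=; lia.
have [k [H1 H2]] := sorted_bracket Hsort (ex_intro2 _ _ 0%N H0 (leq0n m))
  (ex_intro2 _ _ M HM mM).
by have := Hst H1 H2; rewrite -/(step_dir m); case: (odd k) => ->; auto.
Qed.

(* Two consecutive distinct steps are d1 and d2, which form a right angle. *)
Lemma turning_at_change i : (0 < i < M)%N -> step_dir i.-1 != step_dir i -> turning s i.
Proof.
move=> Hi Hne; apply/orP; right.
have -> : psub (at_ s i.-1) (at_ s i) = psub origin (step_dir i.-1).
  rewrite /step_dir (_ : i.-1.+1 = i); last lia.
  by rewrite /psub /origin /=; congr (_, _); ring.
rewrite perp_oppl -/(step_dir i).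
have := step_dir_cases (ltac:(lia) : (i.-1 < M)%N).
have := step_dir_cases (ltac:(lia) : (i < M)%N).
by case=> Ei; case=> Ej; move: Hne; rewrite Ei Ej ?eqxx //= => _; rewrite perp_sym.
Qed.

(* Direction changes are interior turning points; the endpoint 0 is one more. *)
Lemma changes_le_turning : (1 + changes M step_dir 0 <= size tp)%N.
Proof.
rewrite /tp /turning_points size_filter size_staircase /changes.
rewrite (_ : iota 0 M.+1 = 0%N :: iota 1 M) //= leq_add2l.
have -> : iota 1 M = iota 1 (M - 1) ++ iota (1 + (M - 1)) (M - (M - 1)).
  by rewrite -iotaD; congr iota; lia.
rewrite count_cat; apply: leq_trans (leq_addr _ _).
rewrite (@eq_in_count _ _ (fun i => (0 < i < M)%N && (step_dir i.-1 != step_dir i))).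
  by apply: sub_count => i /andP [Hi Hne]; exact: turning_at_change.
by move=> i; rewrite mem_iota => Hi /=; rewrite (_ : (0 < i < M)%N = true) //; lia.
Qed.

End Staircase.

Lemma zip_beheadP (T : eqType) (x0 : T) (s : seq T) x y :
  reflect (exists2 i, (i.+1 < size s)%N & x = nth x0 s i /\ y = nth x0 s i.+1)
          ((x, y) \in zip s (behead s)).
Proof.
elim: s => [|a s IH]; first by apply: (iffP idP) => //; case.
case: s IH => [|b s] IH; first by apply: (iffP idP) => //; case.
rewrite /= in_cons; apply: (iffP orP).
  case=> [/eqP [-> ->]|/IH [i Hi [-> ->]]]; first by exists 0%N.
  by exists i.+1.
case=> [[|i]] /= Hi [Ex Ey]; first by left; rewrite Ex Ey.
by right; apply/IH; exists i => //; rewrite Ex Ey.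
Qed.

Definition based_path (s : seq point) (i : nat) : point := psub (at_ s i) (at_ s 0).

Lemma prefix_same_shape e T S s M : size s = M.+1 -> line_prefix e (based_path s) T M ->
  path_of S s -> same_shape T S.
Proof.
move=> Hsz HP [Hs0 Hperm Her].
have R := proj1 HP.
have fw p p' : p \in nodes T -> p' \in nodes T -> level e p' = level e p + 1 ->
    (padd p (at_ s 0), padd p' (at_ s 0)) \in zip s (behead s).
  move=> pn pn' E; have := dl_range R pn; have := dl_range R pn' => H1 H2.
  rewrite (proj2 HP p pn) (proj2 HP p' pn') /based_path !psubK.
  apply/(zip_beheadP origin); exists (absz (level e p)); first by rewrite Hsz; lia.
  by split => //; rewrite /at_; congr nth; lia.
have bw p p' : (padd p (at_ s 0), padd p' (at_ s 0)) \in zip s (behead s) ->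
    [/\ p \in nodes T, p' \in nodes T & level e p' = level e p + 1].
  move=> /(zip_beheadP origin) [i]; rewrite Hsz => Hi [E1 E2].
  have -> : p = based_path s i by rewrite /based_path {1}/at_ -E1 paddK.
  have -> : p' = based_path s i.+1 by rewrite /based_path {1}/at_ -E2 paddK.
  have [n1 f1] := prefix_node HP (ltac:(lia) : (i <= M)%N).
  have [n2 f2] := prefix_node HP (ltac:(lia) : (i.+1 <= M)%N).
  by rewrite f1 f2; split => //; rewrite -addn1 PoszD.
exists (at_ s 0); split.
  move=> p; rewrite -(perm_mem Hperm); apply/idP/idP.
    move=> pn; have := dl_range R pn => Hr.
    by rewrite (proj2 HP p pn) /based_path psubK /at_ mem_nth // Hsz; lia.
  move=> H; set i := index (padd p (at_ s 0)) s.
  have Hi : (i < size s)%N by rewrite index_mem.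
  have -> : p = based_path s i by rewrite /based_path /at_ nth_index // paddK.
  by case: (prefix_node HP (ltac:(lia) : (i <= M)%N)).
move=> p p'; rewrite Her (dl_erel R); apply/idP/idP.
  case/and3P => pn pn' /orP [/eqP E|/eqP E]; first by rewrite (fw p p').
  by rewrite (fw p' p) ?orbT.
by case/orP => [/bw [-> -> ->]|/bw [-> -> ->]]; rewrite eqxx ?orbT.
Qed.

Lemma staircase_grows (k : nat) (S : gshape) (s : seq point) (adjm : bool) :
  path_of S s -> staircase s -> (size (turning_points s) <= k)%N ->
  exists tf : nat,
    (tf <= (2 * k) * (trunc_log 2 (size (nodes S))).+1)%N /\ grows_in adjm S tf.
Proof.
move=> Hpath [d1 [d2 [/and3P [u1 u2 pp] Hst]]] Hk.
have Hs0 : s != [::] by case: Hpath.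
set M := (size s).-1.
have Hsz : size s = M.+1 by rewrite /M; case: (s) Hs0.
have [h1 h2 hu] := diagonal_levels u1 u2 pp.
have HW i : (i < M)%N -> unitv (step_dir s i) /\ level (padd d1 d2) (step_dir s i) = 1.
  by move=> iM; case: (step_dir_cases Hs0 u1 u2 pp Hst iM) => ->.
have Hq i : (i < M)%N -> based_path s i.+1 = padd (based_path s i) (step_dir s i).
  by move=> _; rewrite /based_path /step_dir /psub /padd /=; congr (_, _); ring.
have q0 : based_path s 0 = origin by rewrite /based_path /psub /origin /= !subrr.
have [t' Ht' [B [E [B0 HB _ HE]]]] := grow_runs (n := M) (N := 0) hu HW Hq
  (leq_subr 0 M) (leq0n M) (reaches_seed adjm (padd d1 d2) q0).
have Hc := changes_le_turning Hs0 u1 u2 pp Hst.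
have Hn : size (nodes S) = M.+1 by case: Hpath => _ /perm_size <- _.
have Hl : (trunc_log 2 M <= trunc_log 2 M.+1)%N by apply: leq_trunc_log.
exists t'; split; last first.
  by exists B, E; do 2!split => //; exact: prefix_same_shape Hsz HE Hpath.
by rewrite Hn; apply: (leq_trans Ht'); rewrite add0n /run_cost; rewrite -/M in Hc; nia.
Qed.

Local Close Scope ring_scope.

Theorem corollary5p1 :
  forall k : nat, exists C : nat,
    forall S : gshape,
      wf_shape S ->
      (exists s : seq point,
          [/\ path_of S s, staircase s & (size (turning_points s) <= k)%N]) ->
      (exists tf : nat,
          (tf <= C * (trunc_log 2 (size (nodes S))).+1)%N /\ grows_in false S tf) /\
      (exists tf : nat,
          (tf <= C * (trunc_log 2 (size (nodes S))).+1)%N /\ grows_in true S tf).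
Proof.
move=> k; exists (2 * k)%N => S _ [s [Hpath Hst Hk]].
by split; apply: staircase_grows Hpath Hst Hk.
Qed.
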